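(* Let $D\in\mathbb{N}_+$, $T\in\mathbb{N}$, and let $\mathcal{D}:\mathbb{R}^{D+T}\times\mathbb{R}^{D+T}\to[0,\infty)$ admit a neural (quasi-)metric representation (so $\mathcal{D}(x,y)$ depends only on $x_{1:D},y_{1:D}$). Then: (a) $\mathcal{D}$, viewed as a function of the spatial coordinates $(x_{1:D},y_{1:D})\in\mathbb{R}^D\times\mathbb{R}^D$, is a quasi-metric on $\mathbb{R}^D$; (b) if each $\mathsf{W}_j$ in the representation is orthogonal and $0<s_j,l_j\le1$ for all $j$, then it is a metric on $\mathbb{R}^D$; (c) if $T\in\mathbb{N}_+$, then $\mathcal{D}$ is a pseudo-quasi-metric on $\mathbb{R}^{D+T}$.
   Context: For $s,l>0$ define $\sigma_{s,l}:\mathbb{R}\to\mathbb{R}$ by $\sigma_{s,l}(x)=\operatorname{sgn}(x)|x|^s$ if $|x|<1$ and $\operatorname{sgn}(x)|x|^l$ if $|x|\ge1$ ($\operatorname{sgn}(x)=1$ for $x\ge0$, $-1$ otherwise); $\sigma\bullet$ is componentwise application. $I^+_D$ is the set of $D\times D$ matrices $\lambda I_D+|\tilde W|$ with $\lambda>0$, $\tilde W$ an arbitrary real $D\times D$ matrix, $|\cdot|$ entrywise absolute value. For $x\in\mathbb{R}^{D+T}$, $x_{1:D}$ denotes its first $D$ coordinates. $\mathcal{D}$ admits a neural (quasi-)metric representation if there are $J\in\mathbb{N}_+$, $s_0,l_0,\dots,s_J,l_J>0$, $\mathsf{W}_j\in I^+_D$ for $j<J$ and $\mathsf{W}_J\in(0,\infty)^{1\times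 D}$ such that $\mathcal{D}(x,y)=\mathsf{W}_J\sigma_{s_J,l_J}\bullet(u_{J-1})$, $u_j=\mathsf{W}_j\sigma_{s_j,l_j}\bullet(u_{j-1})$ for $j=1,\dots,J-1$, and $u_0=|\sigma_{s_0,l_0}\bullet(x_{1:D})-\sigma_{s_0,l_0}\bullet(y_{1:D})|$ (componentwise absolute value). A quasi-metric on a set $X$ is $d:X\times X\to[0,\infty)$ with $d(x,y)=0\iff x=y$, $d(x,y)=d(y,x)$, and $d(x,y)\le C(d(x,z)+d(z,y))$ for some constant $C\ge1$ and all $x,y,z$; it is a metric if $C=1$ works. A pseudo-quasi-metric satisfies the same except that $d(x,y)=0$ need not imply $x=y$ (but $d(x,x)=0$). *)

From HB Require Import structures.
From mathcomp Require Import all_boot all_order all_algebra.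
From mathcomp Require Import reals exp.
Set Implicit Arguments. Unset Strict Implicit. Unset Printing Implicit Defensive.
Import Order.TTheory GRing.Theory Num.Theory.
Local Open Scope ring_scope.

Section Neural.
Variable R : realType.

Definition sgn (x : R) : R := if 0 <= x then 1 else -1.

Definition sigma_sl (s l : R) (x : R) : R :=
  if `|x| < 1 then sgn x * powR `|x| s else sgn x * powR `|x| l.

Definition sigma_vec (D : nat) (s l : R) (u : 'cV[R]_D) : 'cV[R]_D :=
  map_mx (sigma_sl s l) u.

Definition Iplus (D : nat) (W : 'M[R]_D) : Prop :=
  exists (lam : R) (Wt : 'M[R]_D), 0 < lam /\ W = lam%:M + map_mx Num.norm Wt.

Fixpoint neural_layer (D : nat) (s l : nat -> R) (W : nat -> 'M[R]_D)
  (xD yD : 'cV[R]_D) (j : nat) : 'cV[R]_D :=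
  match j with
  | 0 => map_mx Num.norm (sigma_vec (s 0) (l 0) xD - sigma_vec (s 0) (l 0) yD)
  | j'.+1 => W j *m sigma_vec (s j) (l j) (neural_layer s l W xD yD j')
  end.

Definition neural_output (D J : nat) (s l : nat -> R) (W : nat -> 'M[R]_D)
  (WJ : 'M[R]_(1, D)) (xD yD : 'cV[R]_D) : R :=
  (WJ *m sigma_vec (s J) (l J) (neural_layer s l W xD yD J.-1)) ord0 ord0.

Definition neural_rep (D T : nat) (Dist : 'cV[R]_(D + T) -> 'cV[R]_(D + T) -> R)
  (J : nat) (s l : nat -> R) (W : nat -> 'M[R]_D) (WJ : 'M[R]_(1, D)) : Prop :=
  (0 < J)%N /\
  (forall j, (j <= J)%N -> 0 < s j /\ 0 < l j) /\
  (forall j, (j < J)%N -> Iplus (W j)) /\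
  (forall k, 0 < WJ ord0 k) /\
  (forall x y : 'cV[R]_(D + T),
      Dist x y = neural_output J s l W WJ (usubmx x) (usubmx y)).

Definition admits_neural_rep (D T : nat)
  (Dist : 'cV[R]_(D + T) -> 'cV[R]_(D + T) -> R) : Prop :=
  exists J s l W WJ, @neural_rep D T Dist J s l W WJ.

Definition orthogonal_mx (m n : nat) (A : 'M[R]_(m, n)) : Prop :=
  A *m A^T = 1%:M.

End Neural.

Definition pseudo_quasi_metric (R : realType) (X : Type) (d : X -> X -> R) : Prop :=
  (forall x y, 0 <= d x y) /\ (forall x, d x x = 0) /\
  (forall x y, d x y = d y x) /\
  exists C : R, 1 <= C /\ forall x y z, d x y <= C * (d x z + d z y).

Definition quasi_metric (R : realType) (X : Type) (d : X -> X -> R) : Prop :=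
  (forall x y, 0 <= d x y) /\ (forall x y, d x y = 0 <-> x = y) /\
  (forall x y, d x y = d y x) /\
  exists C : R, 1 <= C /\ forall x y z, d x y <= C * (d x z + d z y).

Definition metric (R : realType) (X : Type) (d : X -> X -> R) : Prop :=
  (forall x y, 0 <= d x y) /\ (forall x y, d x y = 0 <-> x = y) /\
  (forall x y, d x y = d y x) /\
  (forall x y z, d x y <= d x z + d z y).

From HB Require Import structures.
From mathcomp Require Import all_boot all_order all_algebra.
From mathcomp Require Import reals exp boolp lra.
Import Order.TTheory GRing.Theory Num.Theory.
Local Open Scope ring_scope.
Set Implicit Arguments. Unset Strict Implicit.

(* On [0, oo) the activation sigma_{s,l} is the increasing function
   t |-> t^s (t < 1), t^l (t >= 1), which vanishes only at 0.  It satisfies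
   sigma(c t) <= c^s c^l sigma(t) for c >= 1, hence turns a C-quasi-triangle
   inequality into a (2C)^s (2C)^l-quasi-triangle inequality; when s, l <= 1,
   sigma(t)/t is nonincreasing, so sigma is subadditive and preserves the
   triangle inequality.  Multiplication by a matrix with nonnegative entries
   preserves all these coordinatewise inequalities.  Layer 0 is the
   coordinatewise distance between images under the injective map sigma, and
   the positive diagonal of each W_j keeps a nonzero coordinate nonzero, so
   every layer, and the output, is a symmetric quasi-metric (a metric when
   s_j, l_j <= 1). *)

Section PowSL.
Variable R : realType.
Implicit Types (p q r t u a b c C : R).

Definition powsl p q t : R := if t < 1 then t `^ p else t `^ q.

Lemma powsl_ge0 p q t : 0 <= powsl p q t.
Proof. by rewrite /powsl; case: ifP => _; apply: powR_ge0. Qed.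

Lemma powsl0 p q : 0 < p -> powsl p q 0 = 0.
Proof. by move=> p0; rewrite /powsl ltr01 powR0 // gt_eqF. Qed.

Lemma powR_lt1 r t : 0 < r -> 0 <= t < 1 -> t `^ r < 1.
Proof.
move=> r0 /andP[t0 t1].
suff : t `^ r < 1 `^ r by rewrite powR1.
by apply: gt0_ltr_powR; rewrite ?nnegrE.
Qed.

Lemma powR_ge1 r t : 0 <= r -> 1 <= t -> 1 <= t `^ r.
Proof.
move=> r0 t1; suff : 1 `^ r <= t `^ r by rewrite powR1.
by apply: ge0_ler_powR; rewrite ?nnegrE // (le_trans ler01 t1).
Qed.

Section PositiveExponents.
Variables (p q : R).
Hypotheses (p0 : 0 < p) (q0 : 0 < q).

Lemma ltr_powsl t u : 0 <= t -> t < u -> powsl p q t < powsl p q u.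
Proof.
move=> t0 tu; have u0 : 0 <= u by exact: ltW (le_lt_trans t0 tu).
rewrite /powsl; case: ifP => t1; case: ifP => u1.
- by apply: gt0_ltr_powR; rewrite ?nnegrE.
- apply: (lt_le_trans (powR_lt1 p0 _)); first by rewrite t0 t1.
  by apply: powR_ge1; [exact: ltW | rewrite leNgt u1].
- by move: t1; rewrite (lt_trans tu u1).
- by apply: gt0_ltr_powR; rewrite ?nnegrE.
Qed.

Lemma ler_powsl t u : 0 <= t -> t <= u -> powsl p q t <= powsl p q u.
Proof.
by move=> t0; rewrite le_eqVlt => /predU1P[->//|tu]; exact/ltW/ltr_powsl.
Qed.

Lemma powsl_gt0 t : 0 < t -> 0 < powsl p q t.
Proof. by move=> t0; rewrite -(powsl0 q p0) ltr_powsl. Qed.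

Lemma powsl_scale c t : 1 <= c -> 0 <= t ->
  powsl p q (c * t) <= c `^ p * c `^ q * powsl p q t.
Proof.
move=> c1 t0; have c0 : 0 <= c by exact: le_trans c1.
have cp1 := powR_ge1 (ltW p0) c1; have cq1 := powR_ge1 (ltW q0) c1.
rewrite /powsl; case: ifP => ct1; case: ifP => t1; rewrite powRM //.
- rewrite mulrAC ler_peMr // mulr_ge0 ?powR_ge0 //.
- suff : 1 <= c * t by rewrite leNgt ct1.
  by rewrite -[1]mul1r ler_pM // leNgt t1.
- rewrite [c `^ p * _]mulrC -mulrA ler_wpM2l ?powR_ge0 //.
  rewrite (le_trans (ltW (powR_lt1 q0 _))) ?t0 // -powRM //.
  by rewrite powR_ge1 ?(ltW p0) // leNgt ct1.
- by rewrite -mulrA ler_peMl // mulr_ge0 ?powR_ge0.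
Qed.

Lemma powsl_quasi C t a b : 1 <= C -> 0 <= t -> 0 <= a -> 0 <= b ->
  t <= C * (a + b) ->
  powsl p q t <= (2 * C) `^ p * (2 * C) `^ q * (powsl p q a + powsl p q b).
Proof.
move=> C1 t0 a0 b0 tC; have C21 : 1 <= 2 * C by lra.
wlog ba : a b a0 b0 tC / b <= a.
  move=> Hwlog; have [ba|/ltW ab] := leP b a; first exact: Hwlog.
  by rewrite addrC; apply: Hwlog; rewrite // addrC.
have t2a : t <= (2 * C) * a by apply: (le_trans tC); nra.
apply: (le_trans (ler_powsl t0 t2a)); apply: (le_trans (powsl_scale C21 a0)).
by rewrite ler_wpM2l ?mulr_ge0 ?powR_ge0 // lerDl powsl_ge0.
Qed.

End PositiveExponents.

Lemma subadditive_of_ratio_noninc (f : R -> R) a b :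
  0 <= f 0 -> (forall t u, 0 < t <= u -> t * f u <= u * f t) ->
  0 <= a -> 0 <= b -> f (a + b) <= f a + f b.
Proof.
move=> f0 ratio; rewrite le0r => /predU1P[->|a0]; first by rewrite add0r lerDr.
rewrite le0r => /predU1P[->|b0]; first by rewrite addr0 lerDl.
have ab0 : 0 < a + b by rewrite addr_gt0.
have fa := ratio a (a + b); have fb := ratio b (a + b).
rewrite -(ler_pM2l ab0) mulrDl mulrDr; apply: lerD.
- by apply: fa; rewrite a0 lerDl ltW.
- by apply: fb; rewrite b0 lerDr ltW.
Qed.

Lemma powR_ratio_noninc r t u : r <= 1 -> 0 < t <= u -> t * u `^ r <= u * t `^ r.
Proof.
move=> r1 /andP[t0 tu]; set c := u / t.
have c1 : 1 <= c by rewrite /c ler_pdivlMr // mul1r.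
have uE : u = t * c by rewrite /c mulrC divfK ?gt_eqF.
rewrite [in u `^ r]uE powRM ?(ltW t0) ?(le_trans ler01 c1) //.
rewrite [in X in _ <= X]uE -mulrA ler_wpM2l ?(ltW t0) //.
by rewrite [c * _]mulrC ler_wpM2l ?powR_ge0 ?ler1_powR.
Qed.

Lemma powsl_ratio_noninc p q t u : p <= 1 -> q <= 1 -> 0 < t <= u ->
  t * powsl p q u <= u * powsl p q t.
Proof.
move=> p1 q1 /andP[t0 tu]; rewrite /powsl; case: ifP => u1; case: ifP => t1.
- by apply: powR_ratio_noninc; rewrite ?t0.
- by move: t1; rewrite (le_lt_trans tu u1).
- apply: (@le_trans _ _ (t * u)).
    by rewrite ler_wpM2l ?ler1_powR ?(ltW t0) // leNgt u1.
  by rewrite mulrC ler_wpM2l ?(le_trans (ltW t0) tu) // ger1_powR // t0 ltW.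
- by apply: powR_ratio_noninc; rewrite ?t0.
Qed.

Lemma powsl_subadd p q a b : p <= 1 -> q <= 1 -> 0 <= a -> 0 <= b ->
  powsl p q (a + b) <= powsl p q a + powsl p q b.
Proof.
move=> p1 q1; apply: subadditive_of_ratio_noninc; first exact: powsl_ge0.
by move=> t u; apply: powsl_ratio_noninc.
Qed.

End PowSL.

Section Sigma.
Variables (R : realType) (p q : R).
Hypotheses (p0 : 0 < p) (q0 : 0 < q).

Lemma ge0_sigma_slE t : 0 <= t -> sigma_sl p q t = powsl p q t.
Proof. by move=> t0; rewrite /sigma_sl /powsl /sgn t0 !mul1r ger0_norm. Qed.

Lemma lt0_sigma_slE t : t < 0 -> sigma_sl p q t = - powsl p q (- t).
Proof.
move=> t0; rewrite /sigma_sl /powsl /sgn leNgt t0 ltr0_norm //.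
by rewrite !mulN1r; case: ifP.
Qed.

Lemma ltr_sigma_sl : {homo sigma_sl p q : t u / t < u}.
Proof.
move=> t u tu; have [t0|t0] := leP 0 t.
  by rewrite !ge0_sigma_slE ?ltr_powsl ?(le_trans t0 (ltW tu)).
rewrite lt0_sigma_slE //; have [u0|u0] := leP 0 u.
  rewrite ge0_sigma_slE // (lt_le_trans _ (powsl_ge0 _ _ _)) // oppr_lt0.
  by rewrite powsl_gt0 // oppr_gt0.
by rewrite lt0_sigma_slE // ltrN2 ltr_powsl ?ltrN2 // oppr_ge0 ltW.
Qed.

Lemma sigma_sl_inj : injective (sigma_sl p q).
Proof. exact/inc_inj/le_mono/ltr_sigma_sl. Qed.

End Sigma.

Section NonnegMatrix.
Variable R : realType.

Definition nonneg_mx m n (A : 'M[R]_(m, n)) := forall i j, 0 <= A i j.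

Variables (m n p : nat) (A : 'M[R]_(m, n)).
Hypothesis A_nonneg : nonneg_mx A.

Lemma mulmx_nonneg (B : 'M[R]_(n, p)) : nonneg_mx B -> nonneg_mx (A *m B).
Proof. by move=> B0 i j; rewrite mxE sumr_ge0 // => k _; rewrite mulr_ge0. Qed.

Lemma mulmx_gt0 (B : 'M[R]_(n, p)) i k j : nonneg_mx B ->
  0 < A i k -> 0 < B k j -> 0 < (A *m B) i j.
Proof.
move=> B0 Aik Bkj; rewrite mxE (bigD1 k) //=.
by rewrite ltr_pwDl ?mulr_gt0 // sumr_ge0 // => l _; rewrite mulr_ge0.
Qed.

Lemma ler_mulmx_quasi (B B1 B2 : 'M[R]_(n, p)) K j :
  (forall k, B k j <= K * (B1 k j + B2 k j)) ->
  forall i, (A *m B) i j <= K * ((A *m B1) i j + (A *m B2) i j).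
Proof.
move=> BK i; rewrite !mxE -big_split mulr_sumr ler_sum // => k _ /=.
by rewrite -mulrDr mulrCA ler_wpM2l.
Qed.

End NonnegMatrix.

Lemma Iplus_nonneg (R : realType) D (W : 'M[R]_D) : Iplus W -> nonneg_mx W.
Proof.
by case=> lam [Wt [lam0 ->]] i k; rewrite !mxE addr_ge0 // mulrn_wge0 // ltW.
Qed.

Lemma Iplus_diag_gt0 (R : realType) D (W : 'M[R]_D) i : Iplus W -> 0 < W i i.
Proof.
by case=> lam [Wt [lam0 ->]]; rewrite !mxE eqxx mulr1n (lt_le_trans lam0) ?lerDl.
Qed.

Section SigmaVec.
Variables (R : realType) (D : nat) (p q : R).
Hypotheses (p0 : 0 < p) (q0 : 0 < q).
Implicit Types u v w : 'cV[R]_D.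

Lemma sigma_vec_nonneg u : nonneg_mx u -> nonneg_mx (sigma_vec p q u).
Proof. by move=> u0 i j; rewrite mxE ge0_sigma_slE ?powsl_ge0. Qed.

Lemma sigma_vec_gt0 u i : 0 < u i ord0 -> 0 < sigma_vec p q u i ord0.
Proof. by move=> ui; rewrite mxE ge0_sigma_slE ?powsl_gt0 ?ltW. Qed.

Lemma sigma_vec0 : sigma_vec p q 0 = 0 :> 'cV[R]_D.
Proof. by apply/matrixP => i j; rewrite !mxE ge0_sigma_slE // powsl0. Qed.

Lemma sigma_vec_quasi C u v w : 1 <= C ->
  nonneg_mx u -> nonneg_mx v -> nonneg_mx w ->
  (forall k, u k ord0 <= C * (v k ord0 + w k ord0)) ->
  forall k, sigma_vec p q u k ord0 <=
    (2 * C) `^ p * (2 * C) `^ q * (sigma_vec p q v k ord0 + sigma_vec p q w k ord0).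
Proof. by move=> C1 u0 v0 w0 uC k; rewrite !mxE !ge0_sigma_slE ?powsl_quasi. Qed.

Lemma sigma_vec_tri u v w : p <= 1 -> q <= 1 ->
  nonneg_mx u -> nonneg_mx v -> nonneg_mx w ->
  (forall k, u k ord0 <= v k ord0 + w k ord0) ->
  forall k,
    sigma_vec p q u k ord0 <= sigma_vec p q v k ord0 + sigma_vec p q w k ord0.
Proof.
move=> p1 q1 u0 v0 w0 uvw k; rewrite !mxE !ge0_sigma_slE //.
by rewrite (le_trans (ler_powsl _ _ _ (uvw k))) ?powsl_subadd ?addr_ge0.
Qed.

End SigmaVec.

Section Layers.
Variables (R : realType) (D J : nat) (s l : nat -> R) (W : nat -> 'M[R]_D).
Hypothesis sl_gt0 : forall j, (j <= J)%N -> 0 < s j /\ 0 < l j.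
Hypothesis W_Iplus : forall j, (j < J)%N -> Iplus (W j).
Implicit Types x y z : 'cV[R]_D.
Local Notation u j x y := (neural_layer s l W x y j).

Lemma neural_layerC j x y : u j x y = u j y x.
Proof.
elim: j => [|j IHj] /=; last by rewrite IHj.
by apply/matrixP => i k; rewrite !mxE distrC.
Qed.

Lemma neural_layer_nonneg j x y : (j < J)%N -> nonneg_mx (u j x y).
Proof.
elim: j => [|j IHj] jJ /=; first by move=> i k; rewrite !mxE.
have [s0 l0] := sl_gt0 (ltnW jJ).
apply: mulmx_nonneg; first exact/Iplus_nonneg/W_Iplus.
exact/sigma_vec_nonneg/IHj/(ltnW jJ).
Qed.

Lemma neural_layerxx j x : (j < J)%N -> u j x x = 0.
Proof.
elim: j => [|j IHj] jJ /=; first by apply/matrixP => i k; rewrite !mxE subrr normr0.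
have [s0 l0] := sl_gt0 (ltnW jJ).
by rewrite IHj ?(ltnW jJ) // sigma_vec0 // mulmx0.
Qed.

Lemma neural_layer_gt0 j x y i : (j < J)%N -> x i ord0 != y i ord0 ->
  0 < u j x y i ord0.
Proof.
move=> + xy; elim: j => [|j IHj] jJ /=.
  have [s0 l0] := sl_gt0 (leq0n J).
  by rewrite !mxE normr_gt0 subr_eq0 (inj_eq (sigma_sl_inj _ _)).
have [s0 l0] := sl_gt0 (ltnW jJ).
apply: (mulmx_gt0 (Iplus_nonneg (W_Iplus jJ)) (k := i)).
- exact/sigma_vec_nonneg/neural_layer_nonneg/(ltnW jJ).
- exact/Iplus_diag_gt0/W_Iplus.
- exact/sigma_vec_gt0/IHj/(ltnW jJ).
Qed.

Lemma neural_layer_quasi j : (j < J)%N -> exists2 C : R, 1 <= C &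
  forall x y z i, u j x y i ord0 <= C * (u j x z i ord0 + u j z y i ord0).
Proof.
elim: j => [|j IHj] jJ.
  by exists 1 => // x y z i; rewrite mul1r !mxE ler_distD.
have [s0 l0] := sl_gt0 (ltnW jJ).
have [C C1 uC] := IHj (ltnW jJ).
exists ((2 * C) `^ s j.+1 * (2 * C) `^ l j.+1).
  by rewrite mulr_ege1 ?powR_ge1 ?ltW //; lra.
have u0 a b : nonneg_mx (u j a b) by exact: neural_layer_nonneg (ltnW jJ).
move=> x y z; apply: (ler_mulmx_quasi (Iplus_nonneg (W_Iplus jJ))).
exact: (sigma_vec_quasi s0 l0 C1 (u0 x y) (u0 x z) (u0 z y) (uC x y z)).
Qed.

Lemma neural_layer_tri j : (forall j, (j <= J)%N -> s j <= 1 /\ l j <= 1) ->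
  (j < J)%N -> forall x y z i, u j x y i ord0 <= u j x z i ord0 + u j z y i ord0.
Proof.
move=> sl1; elim: j => [|j IHj] jJ x y z i; first by rewrite !mxE ler_distD.
have [s0 l0] := sl_gt0 (ltnW jJ); have [s1 l1] := sl1 _ (ltnW jJ).
have u0 a b : nonneg_mx (u j a b) by exact: neural_layer_nonneg (ltnW jJ).
rewrite -[leRHS]mul1r; apply: (ler_mulmx_quasi (Iplus_nonneg (W_Iplus jJ))) => k.
rewrite mul1r; exact: (sigma_vec_tri s0 l0 s1 l1 (u0 x y) (u0 x z) (u0 z y)
  (IHj (ltnW jJ) x y z)).
Qed.

End Layers.

Section Output.
Variables (R : realType) (D J : nat) (s l : nat -> R).
Variables (W : nat -> 'M[R]_D) (WJ : 'M[R]_(1, D)).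
Hypothesis J_gt0 : (0 < J)%N.
Hypothesis sl_gt0 : forall j, (j <= J)%N -> 0 < s j /\ 0 < l j.
Hypothesis W_Iplus : forall j, (j < J)%N -> Iplus (W j).
Hypothesis WJ_gt0 : forall k, 0 < WJ ord0 k.
Implicit Types x y z : 'cV[R]_D.
Local Notation out := (neural_output J s l W WJ).
Local Notation uJ x y := (neural_layer s l W x y J.-1).

Let J1_lt : (J.-1 < J)%N. Proof. by rewrite ltn_predL. Qed.
Let sJ_gt0 : 0 < s J. Proof. by case: (sl_gt0 (leqnn J)). Qed.
Let lJ_gt0 : 0 < l J. Proof. by case: (sl_gt0 (leqnn J)). Qed.
Let WJ_nonneg : nonneg_mx WJ. Proof. by move=> i k; rewrite (ord1 i) ltW. Qed.
Let uJ_nonneg x y : nonneg_mx (uJ x y).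
Proof. exact: neural_layer_nonneg sl_gt0 W_Iplus _ _ _ J1_lt. Qed.

Lemma neural_outputC x y : out x y = out y x.
Proof. by rewrite /neural_output neural_layerC. Qed.

Lemma neural_output_ge0 x y : 0 <= out x y.
Proof. exact/mulmx_nonneg/sigma_vec_nonneg. Qed.

Lemma neural_outputxx x : out x x = 0.
Proof.
by rewrite /neural_output (neural_layerxx _ sl_gt0) // sigma_vec0 // mulmx0 mxE.
Qed.

Lemma neural_output_eq0 x y : out x y = 0 -> x = y.
Proof.
move=> out0; apply/matrixP => i k; rewrite (ord1 k).
have [//|xy] := eqVneq (x i ord0) (y i ord0).
suff : 0 < out x y by rewrite out0 ltxx.
apply: (mulmx_gt0 WJ_nonneg (k := i)) => //; first exact: sigma_vec_nonneg.
exact: (sigma_vec_gt0 sJ_gt0 lJ_gt0 (neural_layer_gt0 sl_gt0 W_Iplus J1_lt xy)).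
Qed.

Lemma neural_output_quasi : exists2 C : R, 1 <= C &
  forall x y z, out x y <= C * (out x z + out z y).
Proof.
have [C C1 uC] := neural_layer_quasi sl_gt0 W_Iplus J1_lt.
exists ((2 * C) `^ s J * (2 * C) `^ l J).
  by rewrite mulr_ege1 ?powR_ge1 ?ltW //; lra.
move=> x y z; apply: (ler_mulmx_quasi WJ_nonneg).
exact: (sigma_vec_quasi sJ_gt0 lJ_gt0 C1 (uJ_nonneg x y) (uJ_nonneg x z)
  (uJ_nonneg z y) (uC x y z)).
Qed.

Lemma neural_output_tri : (forall j, (j <= J)%N -> s j <= 1 /\ l j <= 1) ->
  forall x y z, out x y <= out x z + out z y.
Proof.
move=> sl1 x y z; have [s1 l1] := sl1 _ (leqnn J).
rewrite -[leRHS]mul1r; apply: (ler_mulmx_quasi WJ_nonneg) => k.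
rewrite mul1r; exact: (sigma_vec_tri sJ_gt0 lJ_gt0 s1 l1 (uJ_nonneg x y)
  (uJ_nonneg x z) (uJ_nonneg z y)
  (neural_layer_tri sl_gt0 W_Iplus sl1 J1_lt x y z)).
Qed.

Lemma neural_output_quasi_metric : quasi_metric out.
Proof.
split; [exact: neural_output_ge0 | split; [|split]].
- by move=> x y; split=> [|->]; [exact: neural_output_eq0 | exact: neural_outputxx].
- exact: neural_outputC.
- by have [C C1 outC] := neural_output_quasi; exists C.
Qed.

Lemma neural_output_metric : (forall j, (j <= J)%N -> s j <= 1 /\ l j <= 1) ->
  metric out.
Proof.
move=> sl1; have [out_ge0 [out_eq0 [outC _]]] := neural_output_quasi_metric.
by split; [|split; [|split]] => //; exact: neural_output_tri.
Qed.

End Output.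

Lemma quasi_metric_pseudo_comp (R : realType) (X Y : Type) (d : Y -> Y -> R)
  (f : X -> Y) : quasi_metric d -> pseudo_quasi_metric (fun x y => d (f x) (f y)).
Proof.
case=> d_ge0 [d_eq0 [dC [C [C1 d_quasi]]]].
split=> [x y|]; first exact: d_ge0.
split=> [x|]; first exact/d_eq0.
split=> [x y|]; first exact: dC.
by exists C; split=> // x y z; exact: d_quasi.
Qed.

Section NeuralRep.
Variables (R : realType) (D T J : nat) (s l : nat -> R).
Variables (W : nat -> 'M[R]_D) (WJ : 'M[R]_(1, D)).
Variable Dist : 'cV[R]_(D + T) -> 'cV[R]_(D + T) -> R.
Hypothesis rep : neural_rep Dist J s l W WJ.

Lemma neural_repE :
  Dist = fun x y => neural_output J s l W WJ (usubmx x) (usubmx y).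
Proof. by case: rep => _ [_ [_ [_ DistE]]]; apply/funext => x; apply/funext. Qed.

Lemma neural_rep_spatialE :
  (fun a b : 'cV[R]_D => Dist (col_mx a 0) (col_mx b 0)) = neural_output J s l W WJ.
Proof.
by rewrite neural_repE; apply/funext => a; apply/funext => b; rewrite !col_mxKu.
Qed.

Lemma neural_rep_quasi_metric : quasi_metric (neural_output J s l W WJ).
Proof.
case: rep => J_gt0 [sl_gt0 [W_Iplus [WJ_gt0 _]]].
exact: neural_output_quasi_metric J_gt0 sl_gt0 W_Iplus WJ_gt0.
Qed.

Lemma neural_rep_metric : (forall j, (j <= J)%N -> s j <= 1 /\ l j <= 1) ->
  metric (neural_output J s l W WJ).
Proof.
case: rep => J_gt0 [sl_gt0 [W_Iplus [WJ_gt0 _]]].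
exact: neural_output_metric J_gt0 sl_gt0 W_Iplus WJ_gt0.
Qed.

End NeuralRep.

Unset Implicit Arguments. Set Strict Implicit.

Theorem mainTheorem5 (R : realType) (D T : nat)
  (Dist : 'cV[R]_(D + T) -> 'cV[R]_(D + T) -> R) :
  (0 < D)%N ->
  admits_neural_rep Dist ->
  (* (a) quasi-metric on the spatial coordinates R^D *)
  quasi_metric (fun a b : 'cV[R]_D => Dist (col_mx a 0) (col_mx b 0)) /\
  (* (b) metric when all W_j orthogonal and 0 < s_j, l_j <= 1 *)
  (forall (J : nat) (s l : nat -> R) (W : nat -> 'M[R]_D) (WJ : 'M[R]_(1, D)),
      neural_rep Dist J s l W WJ ->
      (forall j, (j < J)%N -> orthogonal_mx (W j)) ->
      orthogonal_mx WJ ->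
      (forall j, (j <= J)%N -> s j <= 1 /\ l j <= 1) ->
      metric (fun a b : 'cV[R]_D => Dist (col_mx a 0) (col_mx b 0))) /\
  (* (c) pseudo-quasi-metric on R^{D+T} when T > 0 *)
  ((0 < T)%N -> pseudo_quasi_metric Dist).
Proof.
move=> _ [J [s [l [W [WJ rep]]]]]; split; [|split].
- by rewrite (neural_rep_spatialE rep); exact: neural_rep_quasi_metric rep.
-
  move=> J' s' l' W' WJ' rep' _ _ sl1.
  by rewrite (neural_rep_spatialE rep'); exact: neural_rep_metric rep' sl1.
- move=> _; rewrite (neural_repE rep).
  exact/quasi_metric_pseudo_comp/(neural_rep_quasi_metric rep).
Qed.
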